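(* Let $X$ be the Fermi surface (at time $0$) of a geodesic observer in anti-de Sitter space-time with cosmological constant $\lambda<0$, identified via global Fermi coordinates with $\mathbb{R}^3$, $\rho=|x|$, with space-time metric $ds^2=-c^2\cosh^2(a\rho)dt^2+d\rho^2+a^{-2}\sinh^2(a\rho)(d\theta^2+\sin^2\theta\,d\phi^2)$, $a=\sqrt{|\lambda|/3}$. For $\beta>0$, $z>0$, particle mass $m>0$ and bounded Borel $\Lambda\subset X$, let the ideal gas partition function be $$Z_\Lambda(\varnothing)=e^{-\beta|\Lambda|\rho_{\text{vac}}}\sum_{n\ge0}\frac{z^n}{n!}\Big(\int_\Lambda\frac{K_2(\gamma(x))}{\gamma(x)}d\mathbf{x}\Big)^n,\qquad \gamma(x)=\beta mc^2\cosh(a\rho),$$ with $\rho_{\text{vac}}=\lambda c^4/(8\pi G)$. Let $\Lambda_k$ be the ball of radius $k$ centered at the origin. Then the infinite volume pressure $P=\lim_{k\to\infty}\frac{\log Z_{\Lambda_k}(\varnothing)}{\beta|\Lambda_k|}$ exists and $$P=-\frac{\lambda c^4}{8\pi G}.$$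
   Context: $K_2$ is the modified Bessel function of the second kind, $c$ is the speed of light and $G$ Newton's gravitational constant. $d\mathbf{x}=dx^1dx^2dx^3$ is Lebesgue measure in the Fermi coordinates, while $|\Lambda|$ denotes the Riemannian volume of $\Lambda$ for the induced metric $d\rho^2+a^{-2}\sinh^2(a\rho)(d\theta^2+\sin^2\theta d\phi^2)$ on $X$ (balls are taken with respect to the radial coordinate $\rho$, which is proper distance from the origin). *)

From HB Require Import structures.
From mathcomp Require Import all_boot all_order all_algebra.
From mathcomp Require Import all_classical all_reals all_analysis.
Set Implicit Arguments. Unset Strict Implicit. Unset Printing Implicit Defensive.
Import Order.TTheory GRing.Theory Num.Theory numFieldNormedType.Exports.
Local Open Scope classical_set_scope.
Local Open Scope ring_scope.

Section AdS.
Variable R : realType.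

Definition coshR (x : R) : R := (expR x + expR (- x)) / 2.
Definition sinhR (x : R) : R := (expR x - expR (- x)) / 2.

Definition besselK2 (x : R) : R :=
  \int[@lebesgue_measure R]_(t in `[0%R, +oo[%classic)
     (expR (- (x * coshR t)) * coshR (2 * t)).

Definition R3 := ((R * R) * R)%type.

Definition leb3 := ((@lebesgue_measure R \x @lebesgue_measure R)
                    \x @lebesgue_measure R)%E.

Definition rad (p : R3) : R := Num.sqrt (p.1.1 ^+ 2 + p.1.2 ^+ 2 + p.2 ^+ 2).

Definition ballO (k : R) : set R3 := [set p | rad p <= k].

(* density of the Riemannian volume of the metric
   d rho^2 + a^-2 sinh^2(a rho) dOmega^2 w.r.t. Lebesgue measure in
   the Fermi coordinates: (sinh(a rho)/(a rho))^2, equal to 1 at rho = 0 *)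
Definition vol_density (a : R) (p : R3) : R :=
  if rad p == 0 then 1 else (sinhR (a * rad p) / (a * rad p)) ^+ 2.

Definition riem_vol (a : R) (L : set R3) : R :=
  \int[leb3]_(p in L) vol_density a p.

Definition gammaF (a beta m c : R) (p : R3) : R :=
  beta * m * c ^+ 2 * coshR (a * rad p).

Definition partition_fn (a beta z m c rho_vac : R) (L : set R3) : R :=
  let I := \int[leb3]_(p in L)
             (besselK2 (gammaF a beta m c p) / gammaF a beta m c p) in
  expR (- (beta * riem_vol a L * rho_vac)) *
  limn (series (fun n : nat => z ^+ n / (n`!)%:R * I ^+ n)).

End AdS.

(* Summing the series, [Z = exp (z I - beta |L| rho_vac)] with [I] the
   integral of [K_2(gamma)/gamma], so [log Z / (beta |L|) + rho_vac] equals
   [z I / (beta |L|)].  Since [gamma >= beta m c^2] and [K_2(x) <= 216/x^3],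
   the integrand of [I] is bounded and [I] over the ball of radius [K] is
   [O(K^3)] (the ball lies in a cube of side [2K]).  The volume density
   [(sinh(a rho)/(a rho))^2] grows with [rho], and on the cube [[K/4, K/2]^3],
   which lies in the shell [K/4 <= rho <= K], it is at least [(aK/32)^2];
   hence [|L_K| >= c K^5] and the deviation from [-rho_vac] is [O(K^-2)]. *)

From Pilot Require Import Defs.
From HB Require Import structures.
From mathcomp Require Import all_boot all_order all_algebra.
From mathcomp Require Import all_classical all_reals all_analysis.
From mathcomp Require Import ring lra measurable_realfun exponential_distribution.
Import Order.TTheory GRing.Theory Num.Theory numFieldNormedType.Exports.
Set Implicit Arguments. Unset Strict Implicit.
Local Open Scope classical_set_scope.
Local Open Scope ring_scope.

Section nonneg_integral_bounds.
Context d (T : measurableType d) (R : realType).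
Variable mu : {measure set T -> \bar R}.
Local Open Scope ereal_scope.

(* No measurability is needed: a nonnegative integral is the supremum of the
   integrals of the simple functions below the integrand. *)
Lemma ge0_le_integralT (f g : T -> \bar R) :
  (forall x, 0 <= f x) -> (forall x, f x <= g x) ->
  \int[mu]_x f x <= \int[mu]_x g x.
Proof.
move=> f0 fg; have g0 x : 0 <= g x by exact: le_trans (f0 x) (fg x).
rewrite !ge0_integralTE//; apply: ereal_sup_le => _ [h hf <-].
by exists h => //= x; exact: le_trans (hf x) (fg x).
Qed.

Lemma ge0_integral_le_supset (L Q : set T) (f : T -> R) (M q : R) :
  measurable Q -> mu Q = q%:E -> L `<=` Q ->
  (forall x, L x -> 0 <= f x <= M)%R -> (0 <= M)%R ->
  \int[mu]_(x in L) (f x)%:E <= (M * q)%:E.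
Proof.
move=> mQ muQ LQ fM M0; rewrite EFinM -muQ -integral_cst//.
rewrite [X in X <= _]integral_mkcond [X in _ <= X]integral_mkcond.
apply: ge0_le_integralT => x; rewrite !patchE.
  by case: ifP => // /[!inE] /fM /andP[f0 _]; rewrite lee_fin.
case: (boolP (x \in L)) => [/[!inE] Lx | _]; last by case: ifP; rewrite lee_fin.
rewrite ifT; last by rewrite inE; exact: LQ.
by rewrite lee_fin; case/andP: (fM _ Lx).
Qed.

Lemma ge0_integral_ge_subset (L Q : set T) (f : T -> R) (c q : R) :
  measurable Q -> mu Q = q%:E -> Q `<=` L -> (forall x, L x -> 0 <= f x)%R ->
  (forall x, Q x -> c <= f x)%R -> (0 <= c)%R ->
  (c * q)%:E <= \int[mu]_(x in L) (f x)%:E.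
Proof.
move=> mQ muQ QL f0 fc c0; rewrite EFinM -muQ -integral_cst//.
rewrite [X in X <= _]integral_mkcond [X in _ <= X]integral_mkcond.
apply: ge0_le_integralT => x; rewrite !patchE.
  by case: ifP => // _; rewrite lee_fin.
case: (boolP (x \in Q)) => [/[!inE] Qx | _].
  rewrite ifT; last by rewrite inE; exact: QL.
  by rewrite lee_fin; exact: fc.
by case: ifP => [/[!inE] /f0|_]; rewrite lee_fin.
Qed.

End nonneg_integral_bounds.
Arguments ge0_integral_le_supset {d T R} mu {L Q f M q}.
Arguments ge0_integral_ge_subset {d T R} mu {L Q f c q}.

Lemma fine_le_itv (R : realType) (l u : R) (e : \bar R) :
  (l%:E <= e)%E -> (e <= u%:E)%E -> l <= fine e <= u.
Proof. by case: e => [r| |] //=; rewrite !lee_fin => -> ->. Qed.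

Section special_function_bounds.
Variable R : realType.

Lemma expRN_le_inv_cube (y : R) : 0 < y -> expR (- y) <= 27 / y ^+ 3.
Proof.
move=> y0.
have E3 : expR y = expR (y / 3) ^+ 3 by rewrite -expRM_natl; congr expR; field.
have Ey3 := expR_ge1Dx (y / 3).
have E3ge : (y / 3) ^+ 3 <= expR y.
  by rewrite E3; apply: lerXn2r; rewrite ?nnegrE ?expR_ge0 ?divr_ge0 ?ltW//; lra.
have hF : expR (- y) * expR y = 1 by rewrite -expRD addNr expR0.
have F0 := expR_ge0 (- y).
by rewrite ler_pdivlMr ?exprn_gt0//; nra.
Qed.

Lemma coshR_ge1 (x : R) : 1 <= coshR x.
Proof.
rewrite /coshR expRN; set E := expR x.
have E0 : 0 < E := expR_gt0 x.
have EV : E * E^-1 = 1 by rewrite mulfV// gt_eqF.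
have EV0 : 0 < E^-1 by rewrite invr_gt0.
have : 0 <= (E - 1) ^+ 2 * E^-1 by rewrite mulr_ge0 ?sqr_ge0 ?ltW.
have -> : (E - 1) ^+ 2 * E^-1 = E * (E * E^-1) - 2 * (E * E^-1) + E^-1 by ring.
by rewrite EV ler_pdivlMr//; lra.
Qed.

Lemma sinhR_bounds (x : R) : 0 < x -> x ^+ 2 / 8 <= sinhR x <= x * expR x.
Proof.
move=> x0; rewrite /sinhR.
have EF : expR x * expR (- x) = 1 by rewrite -expRD subrr expR0.
have F1 := expR_ge1Dx (- x); have E1 := expR_ge1Dx x.
have F0 := expR_ge0 (- x).
have E2 : expR x = expR (x / 2) ^+ 2 by rewrite -expRM_natl; congr expR; field.
have Ex2 := expR_ge1Dx (x / 2).
have E3 : (1 + x / 2) ^+ 2 <= expR x.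
  by rewrite E2; apply: lerXn2r; rewrite ?nnegrE; lra.
set E := expR x in EF E1 E2 E3 *; set F := expR (- x) in EF F1 F0 *.
by apply/andP; split; nra.
Qed.

(* [cosh (2t) <= e^(2t)] and [x cosh t >= x e^t / 2]; applying
   [expRN_le_inv_cube] at [x e^t / 2] leaves the integrable factor [e^-t]. *)
Lemma besselK2_integrand_le (x t : R) : 0 < x -> 0 <= t ->
  expR (- (x * coshR t)) * coshR (2 * t) <= 216 / x ^+ 3 * expR (- t).
Proof.
move=> x0 t0.
have E1 := expR_ge1Dx t.
set E := expR t in E1.
have E0 : 0 < E := expR_gt0 t.
have EV0 : 0 < E^-1 by rewrite invr_gt0.
have EV : E * E^-1 = 1 by rewrite mulfV// gt_eqF.
have cosh2 : coshR (2 * t) <= E ^+ 2.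
  have e2t : expR (2 * t) = E ^+ 2 by rewrite -expRM_natl.
  rewrite /coshR expRN e2t.
  have e2 : 1 <= E ^+ 2 by nra.
  have : (E ^+ 2)^-1 <= 1 by rewrite invf_le1 ?exprn_gt0.
  lra.
have cosh1 : x * E / 2 <= x * coshR t by rewrite /coshR expRN -/E; nra.
set A := expR (- (x * coshR t)).
have A0 : 0 <= A by apply: expR_ge0.
have A3 : A * (x * E / 2) ^+ 3 <= 27.
  rewrite -ler_pdivlMr ?exprn_gt0 ?divr_gt0 ?mulr_gt0//.
  apply: le_trans (expRN_le_inv_cube _); last by nra.
  by rewrite ler_expR lerN2.
rewrite expRN -/E.
apply: (@le_trans _ _ (A * E ^+ 2)); first exact: ler_wpM2l.
have -> : A * E ^+ 2 = (A * (x * E / 2) ^+ 3) * 8 / x ^+ 3 * E^-1.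
  by field; rewrite ?gt_eqF// exprn_gt0.
apply: ler_wpM2r; first exact: ltW.
by apply: ler_wpM2r; [rewrite invr_ge0 exprn_ge0// ltW | lra].
Qed.

Lemma besselK2_bounds (x : R) : 0 < x -> 0 <= besselK2 x <= 216 / x ^+ 3.
Proof.
have cosh_ge0 (y : R) : 0 <= coshR y by exact: le_trans ler01 (coshR_ge1 _).
move=> x0; apply: fine_le_itv.
  by apply: integral_ge0 => t _; rewrite lee_fin mulr_ge0 ?expR_ge0.
rewrite integral_mkcond.
apply: (@le_trans _ _
  (\int[lebesgue_measure]_t ((216 / x ^+ 3) * exponential_pdf 1 t)%:E)%E).
  apply: ge0_le_integralT => t; rewrite patchE.
    by case: ifP => // _; rewrite lee_fin mulr_ge0 ?expR_ge0.
  rewrite /exponential_pdf patchE; case: ifP => [|_]; last by rewrite mulr0.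
  rewrite inE /= in_itv /= andbT => t0.
  by rewrite lee_fin mul1r mulN1r; exact: besselK2_integrand_le.
under eq_integral do rewrite EFinM.
rewrite ge0_integralZl_EFin ?integral_exponential_pdf ?mule1//.
- by move=> t _; rewrite lee_fin exponential_pdf_ge0.
- by apply/measurable_EFinP; exact: measurable_exponential_pdf.
- by rewrite divr_ge0// exprn_ge0// ltW.
Qed.

Lemma besselK2_div_bounds (g0 x : R) : 0 < g0 -> g0 <= x ->
  0 <= besselK2 x / x <= 216 / g0 ^+ 4.
Proof.
move=> g00 g0x; have x0 : 0 < x := lt_le_trans g00 g0x.
have /andP[K0 K1] := besselK2_bounds x0.
apply/andP; split; first exact: divr_ge0 K0 (ltW x0).
rewrite ler_pdivrMr//; apply: le_trans K1 _.
have -> : 216 / g0 ^+ 4 * x = 216 / x ^+ 3 * (x ^+ 4 / g0 ^+ 4).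
  by field; rewrite !gt_eqF.
apply: ler_peMr; first by rewrite divr_ge0 ?exprn_ge0// ltW.
rewrite ler_pdivlMr ?exprn_gt0// mul1r.
by rewrite lerXn2r// nnegrE ltW.
Qed.

End special_function_bounds.

Section fermi_chart.
Variable R : realType.
Local Notation rad := (@Defs.rad R).

Lemma rad_ge0 (p : R3 R) : 0 <= rad p.
Proof. exact: sqrtr_ge0. Qed.

Lemma sqr_rad (p : R3 R) : rad p ^+ 2 = p.1.1 ^+ 2 + p.1.2 ^+ 2 + p.2 ^+ 2.
Proof. by rewrite sqr_sqrtr// !addr_ge0// sqr_ge0. Qed.

Definition cube (l u : R) : set (R3 R) :=
  (`[l, u]%classic `*` `[l, u]%classic) `*` `[l, u]%classic.

Lemma measurable_cube (l u : R) : measurable (cube l u).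
Proof. by apply: measurableX; first apply: measurableX; exact: measurable_itv. Qed.

Lemma leb3_cube (l u : R) : l < u -> @leb3 R (cube l u) = ((u - l) ^+ 3)%:E.
Proof.
move=> lu; have mi : measurable `[l, u]%classic by exact: measurable_itv.
rewrite /leb3 /cube (@product_measure1E _ _ _ _ _
  (lebesgue_measure \x lebesgue_measure)%E lebesgue_measure) //; last first.
  exact: measurableX.
have lm2 := @product_measure1E _ _ _ _ _ lebesgue_measure lebesgue_measure _ _ mi mi.
set I := `[l, u]%classic in mi lm2 *.
apply: (@eq_trans _ _ (lebesgue_measure I * lebesgue_measure I * lebesgue_measure I)%E).
  by congr (_ * _)%E; exact: lm2.
rewrite lebesgue_measure_itv /= lte_fin lu -EFinB.
by rewrite -!EFinM; congr EFin; ring.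
Qed.

Lemma ballO_sub_cube (k : R) : 0 <= k -> ballO k `<=` cube (- k) k.
Proof.
move=> k0 p rk; have r0 := rad_ge0 p.
have : rad p ^+ 2 <= k ^+ 2 by rewrite lerXn2r.
rewrite sqr_rad => hs.
have s1 := sqr_ge0 p.1.1; have s2 := sqr_ge0 p.1.2; have s3 := sqr_ge0 p.2.
by split; [split|]; rewrite /= in_itv /=; apply/andP; split; nra.
Qed.

Lemma cube_sub_shell (k : R) : 0 < k ->
  cube (k / 4) (k / 2) `<=` [set p | k / 4 <= rad p <= k].
Proof.
move=> k0 p; rewrite /cube /= !in_itv /=.
move=> -[[/andP[a1 a2] /andP[b1 b2]] /andP[c1 c2]].
have r0 := rad_ge0 p.
have rad2_ge : 3 * (k / 4) ^+ 2 <= rad p ^+ 2 by rewrite sqr_rad; nra.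
have rad2_le : rad p ^+ 2 <= 3 * (k / 2) ^+ 2 by rewrite sqr_rad; nra.
by apply/andP; split; nra.
Qed.

Lemma vol_density_bounds (a k : R) (p : R3 R) : 0 < a -> 0 <= k -> rad p <= k ->
  0 <= vol_density a p <= expR (a * k) ^+ 2.
Proof.
move=> a0 k0 rk; have r0 := rad_ge0 p.
have ak0 : 0 <= a * k by exact: mulr_ge0 (ltW a0) k0.
have Ek : 1 <= expR (a * k) by have := expR_ge1Dx (a * k); lra.
rewrite /vol_density; case: ifP => [_|/negbT rn0]; first by apply/andP; split; nra.
have rp : 0 < rad p by rewrite lt_neqAle eq_sym rn0 r0.
have x0 : 0 < a * rad p by exact: mulr_gt0.
have /andP[s1 s2] := sinhR_bounds x0.
set x := a * rad p in x0 s1 s2 *.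
have q0 : 0 <= sinhR x / x by rewrite divr_ge0 ?ltW//; nra.
have q1 : sinhR x / x <= expR (a * k).
  rewrite ler_pdivrMr//; apply: (le_trans s2).
  rewrite mulrC; apply: ler_wpM2r; first exact: ltW.
  by rewrite ler_expR /x ler_pM2l.
by rewrite exprn_ge0//= lerXn2r// nnegrE (le_trans q0 q1).
Qed.

Lemma vol_density_ge (a k : R) (p : R3 R) : 0 < a -> 0 < k -> k / 4 <= rad p ->
  (a * k / 32) ^+ 2 <= vol_density a p.
Proof.
move=> a0 k0 rk.
have rp : 0 < rad p by apply: lt_le_trans rk; rewrite divr_gt0.
rewrite /vol_density ifF ?gt_eqF//.
have x0 : 0 < a * rad p by exact: mulr_gt0.
have xk : a * k / 4 <= a * rad p by rewrite -mulrA ler_wpM2l// ltW.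
have /andP[s1 _] := sinhR_bounds x0.
set x := a * rad p in x0 s1 xk *.
have q1 : x / 8 <= sinhR x / x by rewrite ler_pdivlMr// mulrAC ler_pdivrMr//; nra.
have h0 : 0 <= a * k / 32 by rewrite divr_ge0 ?mulr_ge0 ?ltW.
have q2 : a * k / 32 <= sinhR x / x by lra.
by apply: lerXn2r; rewrite ?nnegrE//; exact: le_trans h0 q2.
Qed.

End fermi_chart.

Section ideal_gas_pressure.
Variable R : realType.

Definition one_particle_integral (a beta m c : R) (L : set (R3 R)) : R :=
  \int[@leb3 R]_(p in L) (besselK2 (gammaF a beta m c p) / gammaF a beta m c p).

Lemma partition_fnE (a beta z m c rho : R) (L : set (R3 R)) :
  partition_fn a beta z m c rho L =
  expR (- (beta * riem_vol a L * rho) + z * one_particle_integral a beta m c L).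
Proof.
rewrite /partition_fn /= expRD; congr (_ * _).
rewrite /expR; congr (limn (series _)); apply/funext => n /=.
by rewrite /exp_coeff /= exprMn [RHS]mulrAC.
Qed.

Lemma ln_partition_fn_div (a beta z m c rho : R) (L : set (R3 R)) :
  0 < beta -> 0 < riem_vol a L ->
  ln (partition_fn a beta z m c rho L) / (beta * riem_vol a L) + rho =
  z * one_particle_integral a beta m c L / (beta * riem_vol a L).
Proof.
by move=> b0 V0; rewrite partition_fnE expRK; field; rewrite ?gt_eqF.
Qed.

Lemma gammaF_ge (a beta m c : R) (p : R3 R) : 0 <= beta * m * c ^+ 2 ->
  beta * m * c ^+ 2 <= gammaF a beta m c p.
Proof. by move=> g0; rewrite -[leLHS]mulr1 ler_wpM2l ?coshR_ge1. Qed.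

Lemma one_particle_integral_ballO_bounds (a beta m c K : R) :
  0 < beta * m * c ^+ 2 -> 0 < K ->
  0 <= one_particle_integral a beta m c (ballO K)
    <= 216 / (beta * m * c ^+ 2) ^+ 4 * (2 * K) ^+ 3.
Proof.
move=> g0 K0.
have fB p := besselK2_div_bounds g0 (gammaF_ge a p (ltW g0)).
have B0 : 0 <= 216 / (beta * m * c ^+ 2) ^+ 4 by case/andP: (fB 0) => f0 /(le_trans f0).
have cubeK : @leb3 R (cube (- K) K) = ((2 * K) ^+ 3)%:E.
  by rewrite leb3_cube; [congr (_ ^+ _)%:E; ring | lra].
have upper := ge0_integral_le_supset (@leb3 R) (measurable_cube _ _) cubeK
  (ballO_sub_cube (ltW K0)) (fun p _ => fB p) B0.
apply: fine_le_itv upper.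
by apply: integral_ge0 => p _; rewrite lee_fin; case/andP: (fB p).
Qed.

Lemma riem_vol_ballO_ge (a K : R) : 0 < a -> 0 < K ->
  (a * K / 32) ^+ 2 * (K / 4) ^+ 3 <= riem_vol a (ballO K).
Proof.
move=> a0 K0.
have cube_sub_ball : cube (K / 4) (K / 2) `<=` ballO K.
  by move=> p /(cube_sub_shell K0) /andP[].
have dens_ge p : cube (K / 4) (K / 2) p -> (a * K / 32) ^+ 2 <= vol_density a p.
  by move=> /(cube_sub_shell K0) /andP[rK _]; exact: vol_density_ge.
have dens_bounds p : ballO K p -> 0 <= vol_density a p <= expR (a * K) ^+ 2.
  exact: vol_density_bounds (ltW K0).
have inner : @leb3 R (cube (K / 4) (K / 2)) = ((K / 4) ^+ 3)%:E.
  by rewrite leb3_cube; [congr (_ ^+ _)%:E; field | lra].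
have outer : @leb3 R (cube (- K) K) = ((2 * K) ^+ 3)%:E.
  by rewrite leb3_cube; [congr (_ ^+ _)%:E; ring | lra].
have lower := ge0_integral_ge_subset (@leb3 R) (measurable_cube _ _) inner
  cube_sub_ball (fun p Lp => proj1 (andP (dens_bounds p Lp))) dens_ge (sqr_ge0 _).
have upper := ge0_integral_le_supset (@leb3 R) (measurable_cube _ _) outer
  (ballO_sub_cube (ltW K0)) dens_bounds (exprn_ge0 _ (expR_ge0 _)).
by case/andP: (fine_le_itv lower upper).
Qed.

(* [2^19 = 2^3 * 32^2 * 4^3] collects the side [2K] of the outer cube, the
   density bound [(aK/32)^2] and the side [K/4] of the inner cube. *)
Lemma pressure_ballO_deviation_bounds (a beta z m c rho K : R) :
  0 < a -> 0 < beta -> 0 < z -> 0 < beta * m * c ^+ 2 -> 0 < K ->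
  0 <= ln (partition_fn a beta z m c rho (ballO K)) /
         (beta * riem_vol a (ballO K)) + rho
    <= 2 ^+ 19 * z * (216 / (beta * m * c ^+ 2) ^+ 4) / (beta * a ^+ 2) / K ^+ 2.
Proof.
move=> a0 b0 z0 g0 K0.
set low := (a * K / 32) ^+ 2 * (K / 4) ^+ 3.
have low0 : 0 < low by rewrite mulr_gt0 ?exprn_gt0 ?divr_gt0 ?mulr_gt0.
have Vlow : low <= riem_vol a (ballO K) := riem_vol_ballO_ge a0 K0.
have V0 := lt_le_trans low0 Vlow.
have /andP[I0 Iup] := one_particle_integral_ballO_bounds a g0 K0.
rewrite ln_partition_fn_div//.
set V := riem_vol a (ballO K) in Vlow V0 *.
set I := one_particle_integral a beta m c (ballO K) in I0 Iup *.
set B := 216 / (beta * m * c ^+ 2) ^+ 4 in Iup *.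
apply/andP; split.
  exact: divr_ge0 (mulr_ge0 (ltW z0) I0) (mulr_ge0 (ltW b0) (ltW V0)).
apply: (@le_trans _ _ (z * (B * (2 * K) ^+ 3) / (beta * low))).
  apply: ler_pM.
  - exact: mulr_ge0 (ltW z0) I0.
  - by rewrite invr_ge0 mulr_ge0 ?ltW.
  - exact: ler_wpM2l (ltW z0) _ _ Iup.
  - by rewrite lef_pV2 ?posrE ?mulr_gt0//; exact: ler_wpM2l (ltW b0) _ _ Vlow.
by rewrite le_eqVlt /low; apply/orP; left; apply/eqP; field; rewrite !gt_eqF.
Qed.

End ideal_gas_pressure.

Lemma cvg_div_sqrn (R : realType) (C : R) :
  (fun k : nat => C / k%:R ^+ 2) @ \oo --> 0.
Proof.
have invn0 : (fun k : nat => (k%:R : R)^-1) @ \oo --> 0.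
  apply/(@gtr0_cvgV0 _ _ _ _ (fun k : nat => (k%:R : R))); last exact: cvgr_idn.
  by exists 1%N => // k /= k1; rewrite ltr0n.
have -> : (fun k : nat => C / k%:R ^+ 2) = (fun k => C * (k%:R^-1 * k%:R^-1)).
  by apply/funext => k; rewrite -expr2 exprVn.
by rewrite -(mulr0 C) -(mulr0 0); apply: cvgM; [exact: cvg_cst | exact: cvgM].
Qed.

Unset Implicit Arguments. Set Strict Implicit.

Theorem corollary2 (R : realType) (c G lambda beta z m : R) :
  0 < c -> 0 < G -> lambda < 0 -> 0 < beta -> 0 < z -> 0 < m ->
  let a := Num.sqrt (`|lambda| / 3) in
  let rho_vac := lambda * c ^+ 4 / (8 * pi * G) in
  (fun k : nat =>
     ln (partition_fn a beta z m c rho_vac (ballO k%:R)) /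
     (beta * riem_vol a (ballO k%:R)))
    @ \oo --> - (lambda * c ^+ 4 / (8 * pi * G)).
Proof.
move=> c0 G0 l0 b0 z0 m0 a rho.
have a0 : 0 < a by rewrite sqrtr_gt0 divr_gt0// normr_gt0 lt_eqF.
have g0 : 0 < beta * m * c ^+ 2 by rewrite !mulr_gt0// exprn_gt0.
pose p k := ln (partition_fn a beta z m c rho (ballO (k%:R : R))) /
  (beta * riem_vol a (ballO (k%:R : R))).
change (p k @[k --> \oo] --> - rho).
have p_rho0 : (fun k => p k + rho) @ \oo --> 0.
  apply: squeeze_cvgr (cvg_cst 0) (cvg_div_sqrn _).
  exists 1%N => // k /= k1.
  by apply: pressure_ballO_deviation_bounds; rewrite // ltr0n.
rewrite (_ : p = fun k => p k + rho - rho); last by apply/funext => k; rewrite addrK.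
by rewrite -[X in _ --> X]add0r; exact: cvgD p_rho0 (cvg_cst _).
Qed.
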